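(* Under the identification $\Lambda_k=\lambda_k$ ($k=1,\dots,N-1$), the stationarity (necessary optimality) conditions of $\tilde{\mathcal J}^{\mathrm{dir},2}_d$ with respect to $(q_0,\dots,q_N,U_d^{(1)},U_d^{(2)},\Lambda_1,\dots,\Lambda_{N-1},\mu,\nu)$ and those of $\tilde{\mathcal J}^{\mathcal E}_d$ with respect to $(y_0,\dots,y_N,U_d^{(1)},U_d^{(2)},\mu,\nu)$ are equivalent.
   Context: Setting: $\mathcal Q=\mathbb R^n$, $y_k=(q_k,\lambda_k)$, controls in $\mathbb R^m$; smooth $f(q,v)\in\mathbb R^n$, $\rho(q)\in\mathbb R^{n\times m}$, $\mathrm g(q)\in\mathbb R^{m\times m}$ symmetric positive definite, terminal cost $\phi(q,v)$; $q^0,\dot q^0\in\mathbb R^n$, $h=T/N$; parameters $\alpha,\gamma\in[0,1]$. Notation: $\bar q_k^\gamma=\gamma q_k+(1-\gamma)q_{k+1}$, $\bar\lambda_k^\gamma$ likewise, $\Delta q_k=(q_{k+1}-q_k)/h$, $\Delta\lambda_k$ likewise, $f_k^\gamma=f(\bar q_k^\gamma,\Delta q_k)$, $\rho_k^\gamma=\rho(\bar q_k^\gamma)$, $\mathrm g_k^\gamma=\mathrm g(\bar q_k^\gamma)$, and $F_k^{(1)}=f_k^\gamma+\rho_k^\gamma U_k^{(1)}$, $F_k^{(2)}=f_k^{1-\gamma}+\rho_k^{1-\gamma}U_k^{(2)}$. Approximate control-dependent discrete Lagrangian: $\tilde L^{\mathcal E}_d(y_k,y_{k+1},U_k^{(1)},U_k^{(2)},h)=h\big[\alpha\big(\Delta\lambda_k^\top\Delta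 q_k+(\bar\lambda_k^\gamma)^\top F_k^{(1)}-\frac12U_k^{(1)\top}\mathrm g_k^\gamma U_k^{(1)}\big)+(1-\alpha)\big(\Delta\lambda_k^\top\Delta q_k+(\bar\lambda_k^{1-\gamma})^\top F_k^{(2)}-\frac12U_k^{(2)\top}\mathrm g_k^{1-\gamma}U_k^{(2)}\big)\big]$. Boundary velocities: $v_0^-=\Delta q_0-h\alpha\gamma F_0^{(1)}-h(1-\alpha)(1-\gamma)F_0^{(2)}$ and $v_N^+=\Delta q_{N-1}+h\alpha(1-\gamma)F_{N-1}^{(1)}+h(1-\alpha)\gamma F_{N-1}^{(2)}$. Approximate control-dependent objective: $\tilde{\mathcal J}^{\mathcal E}_d=\phi(q_N,v_N^+)+\mu^\top(q_0-q^0)+\nu^\top(v_0^--\dot q^0)+\lambda_N^\top v_N^+-\lambda_0^\top v_0^--\sum_{k=0}^{N-1}\tilde L^{\mathcal E}_d(y_k,y_{k+1},U_k^{(1)},U_k^{(2)},h)$. Direct second-order objective, with multipliers $\Lambda_1,\dots,\Lambda_{N-1}\in\mathbb R^n$: $\tilde{\mathcal J}^{\mathrm{dir},2}_d=\phi(q_N,v_N^+)+\mu^\top(q_0-q^0)+\nu^\top(v_0^--\dot q^0)+\frac h2\sum_{k=0}^{N-1}\big(\alpha U_k^{(1)\top}\mathrm g_k^\gamma U_k^{(1)}+(1-\alpha)U_k^{(2)\top}\mathrm g_k^{1-\gamma}U_k^{(2)}\big)+h\sum_{k=1}^{N-1}\Lambda_k^\top\Big\{\frac{q_{k+1}-2q_k+q_{k-1}}{h^2}-\alpha\big[\gamma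 F_k^{(1)}+(1-\gamma)F_{k-1}^{(1)}\big]-(1-\alpha)\big[(1-\gamma)F_k^{(2)}+\gamma F_{k-1}^{(2)}\big]\Big\}$. *)

From HB Require Import structures.
From mathcomp Require Import all_boot all_order all_algebra.
From mathcomp Require Import all_classical all_reals all_analysis.
Set Implicit Arguments. Unset Strict Implicit. Unset Printing Implicit Defensive.
Import Order.TTheory GRing.Theory Num.Theory.
Import numFieldNormedType.Exports.
Local Open Scope ring_scope.

Section DiscreteOCP.
Variables (R : realType) (n m : nat).
Notation cV := 'cV[R]_n.
Notation cW := 'cV[R]_m.

Variables (f : cV * cV -> cV) (rho : cV -> 'M[R]_(n, m)) (g : cV -> 'M[R]_m)
          (phi : cV * cV -> R) (q0 dq0 : cV) (N : nat) (h alpha gam : R).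

Definition dotv (p : nat) (u v : 'cV[R]_p) : R := (u^T *m v) 0 0.

Section Traj.
Variables (q lam : nat -> cV) (U1 U2 : nat -> cW).

Definition qbar (c : R) (k : nat) : cV := c *: q k + (1 - c) *: q k.+1.
Definition lbar (c : R) (k : nat) : cV := c *: lam k + (1 - c) *: lam k.+1.
Definition Dq (k : nat) : cV := h^-1 *: (q k.+1 - q k).
Definition Dl (k : nat) : cV := h^-1 *: (lam k.+1 - lam k).
Definition fk (c : R) (k : nat) : cV := f (qbar c k, Dq k).
Definition F1 (k : nat) : cV := fk gam k + rho (qbar gam k) *m U1 k.
Definition F2 (k : nat) : cV := fk (1 - gam) k + rho (qbar (1 - gam) k) *m U2 k.

Definition LdE (k : nat) : R :=
  h * (alpha * (dotv (Dl k) (Dq k) + dotv (lbar gam k) (F1 k)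
                - 2^-1 * dotv (U1 k) (g (qbar gam k) *m U1 k))
       + (1 - alpha) * (dotv (Dl k) (Dq k) + dotv (lbar (1 - gam) k) (F2 k)
                - 2^-1 * dotv (U2 k) (g (qbar (1 - gam) k) *m U2 k))).

Definition v0m : cV :=
  Dq 0 - (h * alpha * gam) *: F1 0 - (h * (1 - alpha) * (1 - gam)) *: F2 0.
Definition vNp : cV :=
  Dq N.-1 + (h * alpha * (1 - gam)) *: F1 N.-1 + (h * (1 - alpha) * gam) *: F2 N.-1.

End Traj.

Definition JE (q lam : nat -> cV) (U1 U2 : nat -> cW) (mu nu : cV) : R :=
  phi (q N, vNp q U1 U2) + dotv mu (q 0%N - q0) + dotv nu (v0m q U1 U2 - dq0)
  + dotv (lam N) (vNp q U1 U2) - dotv (lam 0%N) (v0m q U1 U2)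
  - \sum_(k < N) LdE q lam U1 U2 k.

(* direct second-order objective \tilde J^{dir,2}_d (multipliers Lam 1 .. Lam N.-1) *)
Definition Jdir (q : nat -> cV) (U1 U2 : nat -> cW) (Lam : nat -> cV) (mu nu : cV) : R :=
  phi (q N, vNp q U1 U2) + dotv mu (q 0%N - q0) + dotv nu (v0m q U1 U2 - dq0)
  + h / 2 * \sum_(k < N) (alpha * dotv (U1 k) (g (qbar q gam k) *m U1 k)
                          + (1 - alpha) * dotv (U2 k) (g (qbar q (1 - gam) k) *m U2 k))
  + h * \sum_(1 <= k < N) dotv (Lam k)
        ((h ^+ 2)^-1 *: (q k.+1 - 2%:R *: q k + q k.-1)
         - alpha *: (gam *: F1 q U1 k + (1 - gam) *: F1 q U1 k.-1)
         - (1 - alpha) *: ((1 - gam) *: F2 q U2 k + gam *: F2 q U2 k.-1)).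

(* stationarity = every directional (Gateaux) derivative exists and vanishes *)
Definition stationary_E (q lam : nat -> cV) (U1 U2 : nat -> cW) (mu nu : cV) : Prop :=
  forall (dq dl : nat -> cV) (du1 du2 : nat -> cW) (dmu dnu : cV),
    is_derive (0 : R) (1 : R)
      (fun t : R => JE (fun k => q k + t *: dq k) (fun k => lam k + t *: dl k)
                       (fun k => U1 k + t *: du1 k) (fun k => U2 k + t *: du2 k)
                       (mu + t *: dmu) (nu + t *: dnu)) 0.

Definition stationary_dir (q : nat -> cV) (U1 U2 : nat -> cW) (Lam : nat -> cV)
    (mu nu : cV) : Prop :=
  forall (dq : nat -> cV) (du1 du2 : nat -> cW) (dL : nat -> cV) (dmu dnu : cV),
    is_derive (0 : R) (1 : R)
      (fun t : R => Jdir (fun k => q k + t *: dq k)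
                       (fun k => U1 k + t *: du1 k) (fun k => U2 k + t *: du2 k)
                       (fun k => Lam k + t *: dL k)
                       (mu + t *: dmu) (nu + t *: dnu)) 0.

End DiscreteOCP.

From Pilot Require Import Defs.
From HB Require Import structures.
From mathcomp Require Import all_boot all_order all_algebra.
From mathcomp Require Import all_classical all_reals all_analysis.
From mathcomp Require Import ring.
Import Order.TTheory GRing.Theory Num.Theory.
Import numFieldNormedType.Exports.
Local Open Scope ring_scope.

(* Under Lam = lam the two objectives are the same function of all their arguments, so
   they have the same directional derivatives and hence the same stationary points.
   The identity is discrete summation by parts: sum_k (a lam_k + b lam_(k+1)) . x_k
   moves lam onto the nodes, producing boundary terms at k = 0 and k = N and interior
   terms lam_k . (a x_k + b x_(k-1)).  Applied to the kinetic term Dl_k . Dq_k and to the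
   two force terms of LdE, the boundary terms cancel lam_N . v_N^+ - lam_0 . v_0^- in JE,
   and the interior terms assemble into h lam_k . (residual of the second-order discrete
   dynamics), the constraint term of Jdir.  No regularity or definiteness hypothesis
   of the theorem is needed. *)

Section InnerProduct.
Variables (R : realType) (p : nat).
Implicit Types (u v w : 'cV[R]_p) (a : R).

Lemma dotvDl u v w : dotv (v + w) u = dotv v u + dotv w u.
Proof. by rewrite /dotv linearD mulmxDl mxE. Qed.

Lemma dotvDr u v w : dotv u (v + w) = dotv u v + dotv u w.
Proof. by rewrite /dotv mulmxDr mxE. Qed.

Lemma dotvZl a u v : dotv (a *: u) v = a * dotv u v.
Proof. by rewrite /dotv linearZ /= -scalemxAl mxE. Qed.

Lemma dotvZr a u v : dotv u (a *: v) = a * dotv u v.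
Proof. by rewrite /dotv -scalemxAr mxE. Qed.

Lemma dotvNl u v : dotv (- u) v = - dotv u v.
Proof. by rewrite -scaleN1r dotvZl mulN1r. Qed.

Lemma dotvNr u v : dotv u (- v) = - dotv u v.
Proof. by rewrite -scaleN1r dotvZr mulN1r. Qed.

End InnerProduct.

Definition dotvE := (dotvDl, dotvDr, dotvZl, dotvZr, dotvNl, dotvNr).

Lemma sum_dotv_by_parts (R : realType) (p : nat) (a b : R) (lam x : nat -> 'cV[R]_p) N :
  \sum_(k < N.+1) dotv (a *: lam k + b *: lam k.+1) (x k)
  = a * dotv (lam 0%N) (x 0%N) + b * dotv (lam N.+1) (x N)
    + \sum_(1 <= k < N.+1) dotv (lam k) (a *: x k + b *: x k.-1).
Proof.
elim: N => [|N IH]; first by rewrite big_ord1 big_geq // !dotvE addr0.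
by rewrite big_ord_recr /= IH [in RHS]big_nat_recr //= !dotvE; ring.
Qed.

Section Objectives.
Variables (R : realType) (n m : nat).
Variables (f : 'cV[R]_n * 'cV[R]_n -> 'cV[R]_n) (rho : 'cV[R]_n -> 'M[R]_(n, m))
  (g : 'cV[R]_n -> 'M[R]_m) (phi : 'cV[R]_n * 'cV[R]_n -> R)
  (q0 dq0 : 'cV[R]_n) (h alpha gam : R).
Hypothesis h_neq0 : h != 0.
Variables (q lam : nat -> 'cV[R]_n) (U1 U2 : nat -> 'cV[R]_m).

Local Notation Dq := (Dq h q).
Local Notation F1 := (F1 f rho h gam q U1).
Local Notation F2 := (F2 f rho h gam q U2).

Definition control_cost k :=
  alpha * dotv (U1 k) (g (qbar q gam k) *m U1 k)
  + (1 - alpha) * dotv (U2 k) (g (qbar q (1 - gam) k) *m U2 k).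

Definition dynamics_defect k :=
  (h ^+ 2)^-1 *: (q k.+1 - 2%:R *: q k + q k.-1)
  - alpha *: (gam *: F1 k + (1 - gam) *: F1 k.-1)
  - (1 - alpha) *: ((1 - gam) *: F2 k + gam *: F2 k.-1).

Lemma LdE_splitE k :
  LdE f rho g h alpha gam q lam U1 U2 k
  = dotv ((-1) *: lam k + 1 *: lam k.+1) (Dq k)
  + dotv ((h * alpha * gam) *: lam k + (h * alpha * (1 - gam)) *: lam k.+1) (F1 k)
  + dotv ((h * (1 - alpha) * (1 - gam)) *: lam k + (h * (1 - alpha) * gam) *: lam k.+1) (F2 k)
  - h / 2 * control_cost k.
Proof. by rewrite /LdE /Dl /control_cost !dotvE; field. Qed.

Lemma interior_termsE k : (0 < k)%N ->
  dotv (lam k) ((-1) *: Dq k + 1 *: Dq k.-1)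
  + dotv (lam k) ((h * alpha * gam) *: F1 k + (h * alpha * (1 - gam)) *: F1 k.-1)
  + dotv (lam k) ((h * (1 - alpha) * (1 - gam)) *: F2 k + (h * (1 - alpha) * gam) *: F2 k.-1)
  = - (h * dotv (lam k) (dynamics_defect k)).
Proof. by case: k => // k _; rewrite /dynamics_defect /Defs.Dq /= !dotvE; field. Qed.

Lemma interior_sumE N :
  \sum_(1 <= k < N) dotv (lam k) ((-1) *: Dq k + 1 *: Dq k.-1)
  + \sum_(1 <= k < N) dotv (lam k)
      ((h * alpha * gam) *: F1 k + (h * alpha * (1 - gam)) *: F1 k.-1)
  + \sum_(1 <= k < N) dotv (lam k)
      ((h * (1 - alpha) * (1 - gam)) *: F2 k + (h * (1 - alpha) * gam) *: F2 k.-1)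
  = - (h * \sum_(1 <= k < N) dotv (lam k) (dynamics_defect k)).
Proof.
rewrite -!big_split mulr_sumr -sumrN.
by apply: eq_big_nat => k /andP[k_gt0 _]; exact: interior_termsE.
Qed.

Lemma JE_eq_Jdir N mu nu :
  JE f rho g phi q0 dq0 N.+1 h alpha gam q lam U1 U2 mu nu
  = Jdir f rho g phi q0 dq0 N.+1 h alpha gam q U1 U2 lam mu nu.
Proof.
rewrite /JE /Jdir.
under eq_bigr do rewrite LdE_splitE.
rewrite ![in X in X = _]big_split /= [in X in X = _]sumrN -[in X in X = _]mulr_sumr.
rewrite !sum_dotv_by_parts /=.
rewrite -[h * \sum_(1 <= k < N.+1) _]opprK -interior_sumE.
by rewrite /vNp /v0m /control_cost /= !dotvE; ring.
Qed.

End Objectives.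

Lemma stationary_dir_iff_E (R : realType) (n m : nat)
  (f : 'cV[R]_n * 'cV[R]_n -> 'cV[R]_n) (rho : 'cV[R]_n -> 'M[R]_(n, m))
  (g : 'cV[R]_n -> 'M[R]_m) (phi : 'cV[R]_n * 'cV[R]_n -> R)
  (q0 dq0 : 'cV[R]_n) (N : nat) (h alpha gam : R)
  (q lam : nat -> 'cV[R]_n) (U1 U2 : nat -> 'cV[R]_m) (mu nu : 'cV[R]_n) :
  h != 0 -> (0 < N)%N ->
  stationary_dir f rho g phi q0 dq0 N h alpha gam q U1 U2 lam mu nu <->
  stationary_E f rho g phi q0 dq0 N h alpha gam q lam U1 U2 mu nu.
Proof.
move=> h_neq0; case: N => // N _.
split=> stat dq; [move=> dl du1 du2 | move=> du1 du2 dl] => dmu dnu.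
- by under eq_fun do rewrite JE_eq_Jdir //; exact: stat.
- by under eq_fun do rewrite -JE_eq_Jdir //; exact: stat.
Qed.

Theorem mainTheorem8 (R : realType) (n m : nat)
  (f : 'cV[R]_n * 'cV[R]_n -> 'cV[R]_n) (rho : 'cV[R]_n -> 'M[R]_(n, m))
  (g : 'cV[R]_n -> 'M[R]_m) (phi : 'cV[R]_n * 'cV[R]_n -> R)
  (q0 dq0 : 'cV[R]_n) (T : R) (N : nat) (alpha gam : R)
  (hf : forall x, differentiable f x) (hrho : forall x, differentiable rho x)
  (hg : forall x, differentiable g x) (hphi : forall x, differentiable phi x)
  (hgsym : forall x, (g x)^T = g x)
  (hgpd : forall x (u : 'cV[R]_m), u != 0 -> 0 < dotv u (g x *m u))
  (hT : 0 < T) (hN : (0 < N)%N)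
  (halpha : 0 <= alpha <= 1) (hgam : 0 <= gam <= 1)
  (q lam : nat -> 'cV[R]_n) (U1 U2 : nat -> 'cV[R]_m) (mu nu : 'cV[R]_n) :
  let h := T / N%:R in
  stationary_dir f rho g phi q0 dq0 N h alpha gam q U1 U2 lam mu nu <->
  stationary_E f rho g phi q0 dq0 N h alpha gam q lam U1 U2 mu nu.
Proof.
move=> h; apply: stationary_dir_iff_E (hN).
by apply: lt0r_neq0; rewrite divr_gt0 // ltr0n.
Qed.
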